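(* Let $f$ be a strictly convex norm on $\mathbb{R}^n$. Then for every $\varepsilon>0$ there exists $\delta>0$ such that for every $\theta\in\partial B_f^1(0)$ and every $\xi\in B_f^1(0)\setminus B_f^1(\theta)$ satisfying $$\Xi(\xi)\in\partial B_f^1(0)\cap\left(B_f^{1+\delta}(\theta)\setminus B_f^1(\theta)\right)$$ we have $f(\xi)>1-\varepsilon$.
   Context: A norm $f$ here is a continuous function $\mathbb{R}^n\to\mathbb{R}_+$ with $f(x)=0\iff x=0$, $f(-x)=f(x)$, $f(tx)=tf(x)$ for $t\ge0$, and convex unit ball with $0$ in its interior; $f$ is strictly convex if its unit ball is strictly convex (its boundary contains no line segments). $B_f^\lambda(a)=\{y\in\mathbb{R}^n: f(y-a)\le\lambda\}$, and $\partial$ denotes the boundary. For $\xi\ne0$, $\Xi(\xi)=\xi/f(\xi)$. *)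

(* vectors of R^n are row vectors 'rV[R]_n over R : realType,
   with the canonical (product) topology of MathComp-Analysis. *)
From HB Require Import structures.
From mathcomp Require Import all_boot all_order all_algebra.
From mathcomp Require Import all_classical all_reals all_analysis.
Set Implicit Arguments. Unset Strict Implicit. Unset Printing Implicit Defensive.
Import Order.TTheory GRing.Theory Num.Theory.
Import numFieldNormedType.Exports.
Local Open Scope classical_set_scope.
Local Open Scope ring_scope.

Definition boundary {T : topologicalType} (A : set T) : set T :=
  closure A `\` interior A.

Definition convex_vset {R : realType} {n : nat} (A : set 'rV[R]_n) : Prop :=
  forall x y (t : R), A x -> A y -> 0 <= t -> t <= 1 -> A ((1 - t) *: x + t *: y).

Definition fball {R : realType} {n : nat} (f : 'rV[R]_n -> R) (lam : R)
  (a : 'rV[R]_n) : set 'rV[R]_n := [set y | f (y - a) <= lam].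

Definition is_norm {R : realType} {n : nat} (f : 'rV[R]_n -> R) : Prop :=
  continuous f /\
  (forall x, 0 <= f x) /\
  (forall x, f x = 0 <-> x = 0) /\
  (forall x, f (- x) = f x) /\
  (forall (t : R) x, 0 <= t -> f (t *: x) = t * f x) /\
  convex_vset (fball f 1 0) /\
  interior (fball f 1 0) 0.

Definition strictly_convex {R : realType} {n : nat} (f : 'rV[R]_n -> R) : Prop :=
  ~ exists x y : 'rV[R]_n, x <> y /\
      forall t : R, 0 <= t -> t <= 1 -> boundary (fball f 1 0) ((1 - t) *: x + t *: y).

Definition Xi {R : realType} {n : nat} (f : 'rV[R]_n -> R) (xi : 'rV[R]_n) : 'rV[R]_n :=
  (f xi)^-1 *: xi.

From HB Require Import structures.
From mathcomp Require Import all_boot all_order all_algebra.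
From mathcomp Require Import all_classical all_reals all_analysis.
From mathcomp Require Import ring lra.
Import Order.TTheory GRing.Theory Num.Theory.
Import numFieldNormedType.Exports.
Local Open Scope classical_set_scope.
Local Open Scope ring_scope.

(* Fix e = min(eps, 1) and put
     midpoint_gap e (th, et) = max (f p) (f q) - f ((p + q) / 2),
   where p = (1 - e) et - th and q = et - th.  Strict convexity makes f at the
   midpoint of two distinct points strictly smaller than at the larger end, so
   this gap is positive on pairs of unit vectors; it is continuous and the unit
   sphere of f is compact, so it is bounded below there by some mu > 0, which is
   the delta of the theorem.  If f xi <= 1 - eps and et = Xi f xi, then xi - th
   lies between -th and (p + q) / 2, so f ((p + q) / 2) > 1 since
   f (xi - th) > 1, whereas convexity bounds f p and f q by max 1 (f q) <= 1 + mu: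
   the gap at (th, et) would be smaller than mu. *)

Section NormTheory.
Context {R : realType} {n : nat} {f : 'rV[R]_n -> R}.
Hypothesis normf : is_norm f.

Lemma normf_continuous : continuous f.
Proof. by case: normf. Qed.

Lemma normf_ge0 x : 0 <= f x.
Proof. by case: normf => _ []. Qed.

Lemma normf_eq0 x : f x = 0 <-> x = 0.
Proof. by case: normf => _ [_ []]. Qed.

Lemma normfN x : f (- x) = f x.
Proof. by case: normf => _ [_ [_ []]]. Qed.

Lemma normf0 : f 0 = 0.
Proof. exact/normf_eq0. Qed.

Lemma normf_gt0 {x} : x != 0 -> 0 < f x.
Proof. by move=> /eqP x_neq0; rewrite lt_def normf_ge0 andbT; apply/eqP => /normf_eq0. Qed.

Lemma normfZ t x : f (t *: x) = `|t| * f x.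
Proof.
case: normf => _ [_ [_ [_ [fZ _]]]].
have [t_ge0|t_lt0] := leP 0 t; first by rewrite fZ // ger0_norm.
by rewrite -normfN -scaleNr fZ ?ltr0_norm // oppr_ge0 ltW.
Qed.

Lemma normf_normalize {x} : x != 0 -> f ((f x)^-1 *: x) = 1.
Proof.
move=> /normf_gt0 fx_gt0.
by rewrite normfZ gtr0_norm ?invr_gt0 // mulVf ?gt_eqF.
Qed.

Lemma ler_normfD x y : f (x + y) <= f x + f y.
Proof.
have [->|x_neq0] := eqVneq x 0; first by rewrite normf0 !add0r.
have [->|y_neq0] := eqVneq y 0; first by rewrite normf0 !addr0.
have a_gt0 := normf_gt0 x_neq0; have b_gt0 := normf_gt0 y_neq0.
set a := f x in a_gt0 *; set b := f y in b_gt0 *.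
have ab_gt0 : 0 < a + b by lra.
have t_ge0 : 0 <= b / (a + b) by rewrite divr_ge0 // ltW.
have t_le1 : b / (a + b) <= 1 by rewrite ler_pdivrMr // mul1r; lra.
have unit_ball_conv : convex_vset (fball f 1 0) by case: normf => _ [_ [_ [_ [_ []]]]].
have in_ball z : z != 0 -> fball f 1 0 ((f z)^-1 *: z).
  by move=> z_neq0; rewrite /fball /= subr0 normf_normalize.
have := unit_ball_conv _ _ _ (in_ball _ x_neq0) (in_ball _ y_neq0) t_ge0 t_le1.
rewrite /fball /= subr0.
have -> : (1 - b / (a + b)) *: (a^-1 *: x) + b / (a + b) *: (b^-1 *: y)
    = (a + b)^-1 *: (x + y).
  by apply/rowP => i; rewrite !mxE; field; lra.
by rewrite normfZ gtr0_norm ?invr_gt0 // ler_pdivrMl // mulr1.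
Qed.

Lemma ler_normf_conic x y {a b} : 0 <= a -> 0 <= b ->
  f (a *: x + b *: y) <= a * f x + b * f y.
Proof.
move=> a_ge0 b_ge0; apply: le_trans (ler_normfD _ _) _.
by rewrite !normfZ !ger0_norm.
Qed.

Lemma normf_ge_norm : exists2 c, 0 < c & forall x, c * `|x| <= f x.
Proof.
have [[x0 x0_unit]|no_unit] := pselect (exists x : 'rV[R]_n, `|x| = 1); last first.
  exists 1 => // x; rewrite mul1r.
  have [->|x_neq0] := eqVneq x 0; first by rewrite normr0 normf_ge0.
  exfalso; apply: no_unit; exists (`|x|^-1 *: x).
  by rewrite normrZ normfV normr_id mulVf // normr_eq0.
pose S := [set x : 'rV[R]_n | `|x| = 1].
have S_compact : compact S.
  apply: bounded_closed_compact.
    exists 1; split; rewrite ?num_real // => M M_gt1 x /= ->; exact: ltW.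
  apply: (@preimage_closed _ _ (fun x : 'rV[R]_n => `|x|) [set 1]); last exact: closed_eq.
  by move=> x _; apply: norm_continuous.
have [c /set_mem c_unit c_min] :=
  EVT_min_rV (ex_intro _ x0 x0_unit) S_compact (continuous_subspaceT normf_continuous).
have c_neq0 : c != 0 by apply: contra_eqN c_unit => /eqP->; rewrite normr0 eq_sym oner_eq0.
exists (f c); first exact: normf_gt0.
move=> x; have [->|x_neq0] := eqVneq x 0; first by rewrite normr0 mulr0 normf_ge0.
have x_gt0 : 0 < `|x| by rewrite normr_gt0.
have /c_min : `|x|^-1 *: x \in S by rewrite inE /S /= normrZ normfV normr_id mulVf ?gt_eqF.
by rewrite normfZ normfV normr_id ler_pdivlMl // mulrC.
Qed.

Lemma boundary_unit_fballE x : boundary (fball f 1 0) x <-> f x = 1.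
Proof.
have fx_cvg := normf_continuous x.
split=> [[x_cl x_int]|fx1].
  apply/eqP; rewrite eq_le; apply/andP; split; rewrite leNgt; apply/negP => fx_cmp.
    have [y [/= y_in fy_gt]] := x_cl _ (cvgr_gt (f x) fx_cvg _ fx_cmp).
    by move: y_in; rewrite /fball /= subr0 leNgt fy_gt.
  apply: x_int; apply: filterS (cvgr_lt (f x) fx_cvg _ fx_cmp) => y /ltW.
  by rewrite /fball /= subr0.
split; first by apply: subset_closure; rewrite /fball /= subr0 fx1.
move=> /nbhs_normP [e e_gt0 ball_in].
pose t := e / (2 * (`|x| + 1)).
have t_gt0 : 0 < t by rewrite divr_gt0 // mulr_gt0 // ltr_wpDl.
have : `|x - (1 + t) *: x| < e.
  rewrite scalerDl scale1r opprD addrA subrr sub0r normrN normrZ gtr0_norm //.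
  have := normr_ge0 x; rewrite /t mulrAC ltr_pdivrMr ?ltr_pM2l //; lra.
move=> /ball_in; rewrite /fball /= subr0 normfZ fx1 mulr1 gtr0_norm; lra.
Qed.

Lemma compact_unit_fsphere : compact [set x | f x = 1].
Proof.
have [c c_gt0 c_le] := normf_ge_norm.
apply: bounded_closed_compact.
  exists c^-1; split; rewrite ?num_real // => M M_gt x /= fx1.
  apply/ltW/le_lt_trans/M_gt; rewrite -(ler_pM2l c_gt0) mulfV ?gt_eqF // -fx1; exact: c_le.
apply: (@preimage_closed _ _ f [set 1]); last exact: closed_eq.
by move=> x _; apply: normf_continuous.
Qed.

Lemma normf_segment_eq1 x y t : f x = 1 -> f y = 1 -> f (2^-1 *: (x + y)) = 1 ->
  0 <= t <= 1 -> f ((1 - t) *: x + t *: y) = 1.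
Proof.
wlog t_le_half : x y t / t <= 2^-1 => [wlog_half fx1 fy1 fmid /andP[t_ge0 t_le1]|].
  have [|t_gt_half] := leP t 2^-1; first by move=> ?; apply: wlog_half => //; lra.
  have -> : (1 - t) *: x + t *: y = (1 - (1 - t)) *: y + (1 - t) *: x.
    by rewrite addrC opprB addrCA subrr addr0.
  by apply: wlog_half; rewrite ?(addrC y) //; lra.
move=> fx1 fy1 fmid /andP[t_ge0 t_le1].
set z := (1 - t) *: x + t *: y.
apply/eqP; rewrite eq_le; apply/andP; split.
  have s_ge0 : 0 <= 1 - t by lra.
  have := ler_normf_conic x y s_ge0 t_ge0; rewrite fx1 fy1; lra.
pose l := (2 * (1 - t))^-1.
have l_gt0 : 0 < l by rewrite invr_gt0; lra.
have l_le1 : l <= 1 by rewrite invf_le1; lra.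
have midE : 2^-1 *: (x + y) = l *: z + (1 - l) *: y.
  by apply/rowP => i; rewrite !mxE /l; field; lra.
have k_ge0 : 0 <= 1 - l by lra.
have := ler_normf_conic z y (ltW l_gt0) k_ge0.
rewrite -midE fmid fy1; nra.
Qed.

Hypothesis strictf : strictly_convex f.

Lemma normf_midpoint_lt_max p q : p != q ->
  f (2^-1 *: (p + q)) < Num.max (f p) (f q).
Proof.
move=> p_neq_q; rewrite ltNge; apply/negP => max_le_mid.
have mid_le : f (2^-1 *: (p + q)) <= 2^-1 * f p + 2^-1 * f q.
  by rewrite scalerDr; apply: ler_normf_conic.
have fp_le : f p <= Num.max (f p) (f q) by rewrite le_max lexx.
have fq_le : f q <= Num.max (f p) (f q) by rewrite le_max lexx orbT.
set c := f (2^-1 *: (p + q)) in max_le_mid mid_le.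
have [fp_c fq_c] : f p = c /\ f q = c by split; lra.
have p_neq0 : p != 0.
  apply: contra_neq p_neq_q => p0; rewrite p0; apply/esym/(normf_eq0 q).
  by rewrite fq_c -fp_c p0 normf0.
have c_gt0 : 0 < c by rewrite -fp_c normf_gt0.
apply: strictf; exists (c^-1 *: p), (c^-1 *: q); split.
  by move/(congr1 ( *:%R c)); rewrite !scalerA mulfV ?gt_eqF // !scale1r; apply/eqP.
move=> t t_ge0 t_le1; apply/boundary_unit_fballE.
have unit_scale z : f z = c -> f (c^-1 *: z) = 1.
  by move=> fz; rewrite normfZ gtr0_norm ?invr_gt0 // fz mulVf ?gt_eqF.
apply: normf_segment_eq1; rewrite ?t_ge0 ?unit_scale //.
by rewrite -scalerDr scalerA mulrC -scalerA unit_scale.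
Qed.

Lemma normf_sub_gt1_scale {th et s u} : f th = 1 -> 0 < s <= u ->
  1 < f (s *: et - th) -> 1 < f (u *: et - th).
Proof.
move=> fth /andP[s_gt0 s_le_u] lt1.
have u_gt0 : 0 < u by apply: lt_le_trans s_le_u.
have r_gt0 : 0 < s / u by rewrite divr_gt0.
have r_le1 : 1 - s / u >= 0 by rewrite subr_ge0 ler_pdivrMr // mul1r.
have : s *: et - th = (s / u) *: (u *: et - th) + (1 - s / u) *: (- th).
  by apply/rowP => i; rewrite !mxE; field; rewrite gt_eqF.
move: lt1 => /[swap] -> /lt_le_trans/(_ (ler_normf_conic _ _ (ltW r_gt0) r_le1)).
rewrite normfN fth; nra.
Qed.

Definition midpoint_gap (e : R) (z : 'rV[R]_n * 'rV[R]_n) : R :=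
  Num.max (f ((1 - e) *: z.2 - z.1)) (f (z.2 - z.1)) - f ((1 - e / 2) *: z.2 - z.1).

Lemma continuous_midpoint_gap e : continuous (midpoint_gap e).
Proof.
have normf_comp (g : 'rV[R]_n * 'rV[R]_n -> 'rV[R]_n) :
    continuous g -> continuous (fun z => f (g z)).
  by move=> g_cont z; apply: continuous_comp (g_cont z) (normf_continuous _).
have diff_cont a : continuous (fun z : 'rV[R]_n * 'rV[R]_n => a *: z.2 - z.1).
  by move=> z; apply: cvgB; [apply: cvgZr; exact: cvg_snd | exact: cvg_fst].
move=> z; apply: cvgB; last exact: normf_comp.
apply: continuous_max; first exact: normf_comp.
apply: normf_comp => {}z; apply: cvgB; [exact: cvg_snd | exact: cvg_fst].
Qed.

Lemma midpoint_gap_gt0 e th et : e != 0 -> et != 0 -> 0 < midpoint_gap e (th, et).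
Proof.
move=> e_neq0 et_neq0; rewrite /midpoint_gap /= subr_gt0.
have -> : (1 - e / 2) *: et - th = 2^-1 *: (((1 - e) *: et - th) + (et - th)).
  by apply/rowP => i; rewrite !mxE; field.
apply: normf_midpoint_lt_max.
have -> : (1 - e) *: et - th = (et - th) - e *: et.
  by apply/rowP => i; rewrite !mxE; ring.
by rewrite -subr_eq0 addrAC subrr add0r oppr_eq0 scaler_eq0 negb_or e_neq0.
Qed.

Lemma midpoint_gap_uniform_gt0 e : e != 0 -> exists2 mu, 0 < mu &
  forall th et, f th = 1 -> f et = 1 -> mu <= midpoint_gap e (th, et).
Proof.
move=> e_neq0.
have [[x0 fx0]|no_unit] := pselect (exists x, f x = 1); last first.
  by exists 1 => // th et fth; exfalso; apply: no_unit; exists th.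
pose S := [set x | f x = 1].
have SS_compact : compact (S `*` S) by apply: compact_setX; apply: compact_unit_fsphere.
have [[th0 et0] /set_mem [_ fet0] gap_min] := compact_EVT_min
  (ex_intro _ (x0, x0) (conj fx0 fx0)) SS_compact
  (continuous_subspaceT (continuous_midpoint_gap e)).
exists (midpoint_gap e (th0, et0)); last by move=> th et fth fet; apply: gap_min; rewrite inE.
apply: midpoint_gap_gt0 => //; apply/eqP => et0_eq0.
by move: fet0; rewrite /S /= et0_eq0 normf0 => /eqP; rewrite eq_sym oner_eq0.
Qed.

Lemma midpoint_gap_lt {e th et s} : 0 <= e <= 1 -> f th = 1 -> 0 < s <= 1 - e / 2 ->
  1 < f (s *: et - th) -> midpoint_gap e (th, et) < Num.max 1 (f (et - th)) - 1.
Proof.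
move=> /andP[e_ge0 e_le1] fth s_bounds far.
have one_le : 1 <= Num.max 1 (f (et - th)) by rewrite le_max lexx.
have fq_le : f (et - th) <= Num.max 1 (f (et - th)) by rewrite le_max lexx orbT.
have fp_le : f ((1 - e) *: et - th) <= Num.max 1 (f (et - th)).
  have -> : (1 - e) *: et - th = (1 - e) *: (et - th) + e *: (- th).
    by apply/rowP => i; rewrite !mxE; ring.
  have e'_ge0 : 0 <= 1 - e by lra.
  apply: le_trans (ler_normf_conic _ _ e'_ge0 e_ge0) _; rewrite normfN fth; nra.
have max_le : Num.max (f ((1 - e) *: et - th)) (f (et - th)) <= Num.max 1 (f (et - th)).
  by rewrite ge_max fp_le fq_le.
have := normf_sub_gt1_scale fth s_bounds far.
rewrite /midpoint_gap /=; lra.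
Qed.

End NormTheory.

Arguments midpoint_gap {R n} f e z.

Theorem lemma2p3 (R : realType) (n : nat) (f : 'rV[R]_n -> R) :
  is_norm f -> strictly_convex f ->
  forall eps : R, 0 < eps ->
  exists delta : R, 0 < delta /\
    forall theta xi : 'rV[R]_n,
      boundary (fball f 1 0) theta ->
      (fball f 1 0 `\` fball f 1 theta) xi ->
      (boundary (fball f 1 0) `&` (fball f (1 + delta) theta `\` fball f 1 theta)) (Xi f xi) ->
      1 - eps < f xi.
Proof.
move=> normf strictf eps eps_gt0.
pose e := Num.min eps 1.
have e_gt0 : 0 < e by rewrite lt_min eps_gt0 ltr01.
have e_le1 : e <= 1 by rewrite ge_min lexx orbT.
have e_le_eps : e <= eps by rewrite ge_min lexx.
have [mu mu_gt0 gap_ge] := midpoint_gap_uniform_gt0 normf strictf e (lt0r_neq0 e_gt0).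
exists mu; split=> // th xi /(boundary_unit_fballE normf) fth [_ xi_far].
move=> [/(boundary_unit_fballE normf) fXi [Xi_near _]].
rewrite ltNge; apply/negP => fxi_small.
have xi_neq0 : xi != 0.
  apply/eqP => xi0; move: fXi; rewrite /Xi xi0 scaler0 (normf0 normf).
  by move/eqP; rewrite eq_sym oner_eq0.
have fxi_gt0 := normf_gt0 normf xi_neq0.
have xiE : xi = f xi *: Xi f xi by rewrite /Xi scalerA mulfV ?scale1r ?gt_eqF.
have s_bounds : 0 < f xi <= 1 - e / 2 by rewrite fxi_gt0 /=; lra.
have far : 1 < f (f xi *: Xi f xi - th) by rewrite -xiE ltNge; apply/negP.
have e_bounds : 0 <= e <= 1 by rewrite (ltW e_gt0) e_le1.
have := midpoint_gap_lt normf e_bounds fth s_bounds far.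
have := gap_ge _ _ fth fXi.
rewrite /fball /= in Xi_near.
have : Num.max 1 (f (Xi f xi - th)) <= 1 + mu by rewrite ge_max Xi_near andbT; lra.
lra.
Qed.
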